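(* Let $(A^\bullet,\int_A)$ and $(B^\bullet,\int_B)$ be Poincaré duality $\mathbb R$-algebras of dimensions $d_A\ge1$ and $d_B\ge1$, and let $\ell_A\in A^1$, $\ell_B\in B^1$. If $A^\bullet$ satisfies $\operatorname{HR}^{\le1}_{\ell_A}$ and $B^\bullet$ satisfies $\operatorname{HR}^{\le1}_{\ell_B}$, then $((A\otimes B)^\bullet,\int_{A\otimes B})$ satisfies $\operatorname{HR}^{\le1}_{\ell_A\otimes1+1\otimes\ell_B}$.
   Context: A graded finite commutative $\mathbb R$-algebra $A^\bullet=\bigoplus_{i=0}^dA^i$ is a Poincaré duality algebra of dimension $d$ with degree map $\int:A^d\xrightarrow{\sim}\mathbb R$ if $A^0=\mathbb R$ and $(\xi,\zeta)\mapsto\int\xi\zeta$ is a non-degenerate pairing $A^i\times A^{d-i}\to\mathbb R$ for all $i$. $(A\otimes B)^k=\bigoplus_{i+j=k}A^i\otimes B^j$, a Poincaré duality algebra of dimension $d_A+d_B$ with $\int_{A\otimes B}(a\otimes b)=\int_Aa\cdot\int_Bb$. For $\ell\in A^1$ and $0\le i\le\lfloor d/2\rfloor$: $Q^i_\ell(x,y)=\int xy\ell^{d-2i}$ on $A^i$; the primitive space is $P^i_\ell=\{x\in A^i: x\ell^{d-2i+1}=0\}$; $A^\bullet$ satisfies $\operatorname{HR}^i_\ell$ if $(-1)^iQ^i_\ell$ is positive definite on $P^i_\ell$; $\operatorname{HR}^{\le1}_\ell$ means $\operatorname{HR}^0_\ell$ and $\operatorname{HR}^1_\ell$. *)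

(* Graded finite commutative R-algebras are represented by a
   homogeneous basis (a finite index type) and structure constants. *)
From HB Require Import structures.
From mathcomp Require Import all_boot all_order all_algebra.
From mathcomp Require Import reals.
Set Implicit Arguments. Unset Strict Implicit. Unset Printing Implicit Defensive.
Import Order.TTheory GRing.Theory Num.Theory.
Local Open Scope ring_scope.

Section GradedAlgebras.
Variable R : realType.

(* A finite-dimensional graded R-algebra given by a basis indexed by [gidx],
   each basis vector e_k homogeneous of degree [gdeg k], structure constants
   e_k * e_l = \sum_m gmul k l m e_m, a unit element [gone] (in coordinates),
   and a linear functional [gint] (in coordinates) used as degree map. *)
Record galg := GAlg {
  gidx : finType;
  gdeg : gidx -> nat;
  gmul : gidx -> gidx -> gidx -> R;
  gone : {ffun gidx -> R};
  gint : {ffun gidx -> R} }.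

Definition elt (A : galg) := {ffun gidx A -> R}.

Definition amul (A : galg) (x y : elt A) : elt A :=
  [ffun m => \sum_k \sum_l x k * y l * @gmul A k l m].

Definition homog (A : galg) (i : nat) (x : elt A) : Prop :=
  forall k, @gdeg A k != i -> x k = 0.

Definition aint (A : galg) (x : elt A) : R := \sum_k gint A k * x k.

Fixpoint apow (A : galg) (x : elt A) (n : nat) : elt A :=
  match n with 0 => gone A | n'.+1 => amul x (apow x n') end.

Definition is_gcalg (A : galg) : Prop :=
  [/\ (forall k l m, @gmul A k l m != 0 -> @gdeg A m = (@gdeg A k + @gdeg A l)%N),
      (forall k l m, @gmul A k l m = @gmul A l k m),
      (forall x y z : elt A, amul (amul x y) z = amul x (amul y z)),
      (forall x : elt A, amul (gone A) x = x) &
      gone A != 0 /\ (forall x : elt A, homog 0 x <-> exists a : R, x = [ffun k => a * gone A k])].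

Definition is_PD (A : galg) (d : nat) : Prop :=
  [/\ is_gcalg A,
      (forall k, (@gdeg A k <= d)%N),
      (* aint : A^d -> R is a linear isomorphism *)
      (forall x : elt A, homog d x -> aint x = 0 -> x = 0),
      (exists x : elt A, homog d x /\ aint x = 1) &
      (* non-degenerate pairing A^i x A^(d-i) -> R *)
      (forall i, (i <= d)%N ->
        (forall x : elt A, homog i x -> x != 0 ->
           exists y : elt A, homog (d - i) y /\ aint (amul x y) != 0) /\
        (forall y : elt A, homog (d - i) y -> y != 0 ->
           exists x : elt A, homog i x /\ aint (amul x y) != 0))].

Definition Qform (A : galg) (d : nat) (l : elt A) (i : nat) (x y : elt A) : R :=
  aint (amul x (amul y (apow l (d - 2 * i)))).

Definition primitive (A : galg) (d : nat) (l : elt A) (i : nat) (x : elt A) : Prop :=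
  homog i x /\ amul x (apow l (d - 2 * i + 1)) = 0.

Definition HR (A : galg) (d : nat) (l : elt A) (i : nat) : Prop :=
  (2 * i <= d)%N ->
  forall x : elt A, primitive d l i x -> x != 0 ->
    0 < (-1) ^+ i * Qform d l i x x.

Definition HRle1 (A : galg) (d : nat) (l : elt A) : Prop :=
  HR d l 0 /\ HR d l 1.

(* tensor product: basis e_k (x) f_k' *)
Definition gtensor (A B : galg) : galg :=
  @GAlg (gidx A * gidx B)%type
    (fun p => (@gdeg A p.1 + @gdeg B p.2)%N)
    (fun p q r => @gmul A p.1 q.1 r.1 * @gmul B p.2 q.2 r.2)
    [ffun p => gone A p.1 * gone B p.2]
    [ffun p => gint A p.1 * gint B p.2].

Definition etens (A B : galg) (a : elt A) (b : elt B) : elt (gtensor A B) :=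
  [ffun p => a p.1 * b p.2].

End GradedAlgebras.

From HB Require Import structures.
From mathcomp Require Import all_boot all_order all_algebra.
From mathcomp Require Import reals ring lra zify.
Set Implicit Arguments. Unset Strict Implicit. Unset Printing Implicit Defensive.
Import Order.TTheory GRing.Theory Num.Theory.
Local Open Scope ring_scope.

(* The parts of degree at most 1 of A (x) B are spanned by 1 (x) 1 and by A^1 (x) 1 + 1 (x) B^1.
   Expanding L^k = sum_j C(k, j) lA^j (x) lB^(k-j), the integral of a product of pure tensors
   keeps only the term of bidegree (dA, dB).  Hence Q^0(1 (x) 1) = C(dA + dB, dA) alpha beta > 0
   with alpha = int lA^dA, beta = int lB^dB, and for x = a (x) 1 + 1 (x) b everything is
   expressed through sA = int a lA^(dA-1), qA = int a^2 lA^(dA-2) and their analogues sB, qB.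
   On each factor, HR^1 applied to the primitive element alpha a - sA lA yields the Hodge index
   inequality qA alpha <= sA^2, with qA < 0 when sA = 0 and a <> 0.  After normalising the
   binomial coefficients, primitivity of x reads dA sA beta + dB alpha sB = 0, and
   alpha beta Q^1(x, x) is then a positive multiple of a quantity at most -(dA X^2 + dB Y^2),
   X = sA beta, Y = alpha sB, which is negative unless sA = sB = 0, where the strict
   inequalities take over. *)

Section Coordinates.
Variables (R : realType) (A : galg R).
Implicit Types (x y z : elt A) (c : R).

(* [elt A] has no canonical [lmodType R] structure ([R] is an [lmodType R] only as [R^o]). *)
Definition escale c x : elt A := [ffun k => c * x k].

(* [pairing l k x y] is [\int x y l^k]; [Qform d l i] unfolds to [pairing l (d - 2 i)]. *)
Definition pairing (l : elt A) (k : nat) x y : R := aint (amul x (amul y (apow l k))).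

Definition degree_bounded (d : nat) : Prop := forall k : gidx A, (gdeg k <= d)%N.

Lemma amulDl x y z : amul (x + y) z = amul x z + amul y z.
Proof.
apply/ffunP => m; rewrite !ffunE -big_split; apply: eq_bigr => k _.
by rewrite -big_split; apply: eq_bigr => l _; rewrite ffunE !mulrDl.
Qed.

Lemma amulDr x y z : amul x (y + z) = amul x y + amul x z.
Proof.
apply/ffunP => m; rewrite !ffunE -big_split; apply: eq_bigr => k _.
by rewrite -big_split; apply: eq_bigr => l _; rewrite ffunE mulrDr mulrDl.
Qed.

Lemma amul0l x : amul 0 x = 0.
Proof.
apply/ffunP => m; rewrite !ffunE big1 // => k _.
by rewrite big1 // => l _; rewrite ffunE !mul0r.
Qed.

Lemma amul0r x : amul x 0 = 0.
Proof.
apply/ffunP => m; rewrite !ffunE big1 // => k _.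
by rewrite big1 // => l _; rewrite ffunE mulr0 mul0r.
Qed.

Lemma amulZl c x y : amul (escale c x) y = escale c (amul x y).
Proof.
apply/ffunP => m; rewrite !ffunE mulr_sumr; apply: eq_bigr => k _.
by rewrite mulr_sumr; apply: eq_bigr => l _; rewrite ffunE; ring.
Qed.

Lemma amulZr c x y : amul x (escale c y) = escale c (amul x y).
Proof.
apply/ffunP => m; rewrite !ffunE mulr_sumr; apply: eq_bigr => k _.
by rewrite mulr_sumr; apply: eq_bigr => l _; rewrite ffunE; ring.
Qed.

Lemma amul_sumr (I : Type) (r : seq I) (P : pred I) (F : I -> elt A) x :
  amul x (\sum_(i <- r | P i) F i) = \sum_(i <- r | P i) amul x (F i).
Proof. exact: (big_morph (amul x) (amulDr x) (amul0r x)). Qed.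

Lemma amulMnr x y n : amul x (y *+ n) = amul x y *+ n.
Proof. by elim: n => [|n IHn]; rewrite ?amul0r // !mulrS amulDr IHn. Qed.

Lemma aintD x y : aint (x + y) = aint x + aint y.
Proof. by rewrite /aint -big_split; apply: eq_bigr => k _; rewrite ffunE mulrDr. Qed.

Lemma aint0 : aint (0 : elt A) = 0.
Proof. by rewrite /aint big1 // => k _; rewrite ffunE mulr0. Qed.

Lemma aintZ c x : aint (escale c x) = c * aint x.
Proof. by rewrite /aint mulr_sumr; apply: eq_bigr => k _; rewrite ffunE; ring. Qed.

Lemma aint_sum (I : Type) (r : seq I) (P : pred I) (F : I -> elt A) :
  aint (\sum_(i <- r | P i) F i) = \sum_(i <- r | P i) aint (F i).
Proof. exact: (big_morph _ aintD aint0). Qed.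

Lemma aintMn x n : aint (x *+ n) = aint x *+ n.
Proof. by elim: n => [|n IHn]; rewrite ?aint0 // !mulrS aintD IHn. Qed.

Lemma pairingDl l k x y z : pairing l k (x + y) z = pairing l k x z + pairing l k y z.
Proof. by rewrite /pairing amulDl aintD. Qed.

Lemma pairingDr l k x y z : pairing l k x (y + z) = pairing l k x y + pairing l k x z.
Proof. by rewrite /pairing amulDl amulDr aintD. Qed.

Lemma pairingZ l k c c' x y :
  pairing l k (escale c x) (escale c' y) = c * c' * pairing l k x y.
Proof. by rewrite /pairing !amulZl amulZr !aintZ mulrA. Qed.

Lemma homogD i x y : homog i x -> homog i y -> homog i (x + y).
Proof. by move=> hx hy k hk; rewrite ffunE hx // hy // addr0. Qed.

Lemma homogZ i c x : homog i x -> homog i (escale c x).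
Proof. by move=> hx k hk; rewrite ffunE hx // mulr0. Qed.

Lemma homog_bound_eq0 d i x :
  degree_bounded d -> (d < i)%N -> homog i x -> x = 0.
Proof.
move=> hd hi hx; apply/ffunP => k; rewrite ffunE; apply: hx.
by apply: contraTneq (hd k) => ->; rewrite -ltnNge.
Qed.

End Coordinates.

Section GradedAlgebra.
Variables (R : realType) (A : galg R).
Hypothesis gcA : is_gcalg A.
Implicit Types (x y z l : elt A).

Lemma gdeg_gmul (k k' m : gidx A) : gmul k k' m != 0 -> gdeg m = (gdeg k + gdeg k')%N.
Proof. by case: gcA => h *; apply: h. Qed.

Lemma amulA x y z : amul (amul x y) z = amul x (amul y z).
Proof. by case: gcA. Qed.

Lemma amul1 x : amul (gone A) x = x.
Proof. by case: gcA. Qed.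

Lemma amulC x y : amul x y = amul y x.
Proof.
case: gcA => _ hC _ _ _; apply/ffunP => m; rewrite !ffunE exchange_big.
by apply: eq_bigr => k _; apply: eq_bigr => l _; rewrite hC; ring.
Qed.

Lemma homog0P x : homog 0 x <-> exists c, x = escale c (gone A).
Proof. by case: gcA => _ _ _ _ [_ ->]. Qed.

Lemma homog_gone : homog 0 (gone A).
Proof. by apply/homog0P; exists 1; apply/ffunP => k; rewrite ffunE mul1r. Qed.

Lemma homog_amul i j x y : homog i x -> homog j y -> homog (i + j) (amul x y).
Proof.
move=> hx hy m hm; rewrite ffunE big1 // => k _; rewrite big1 // => k' _.
have [->|xk] := eqVneq (x k) 0; first by rewrite !mul0r.
have [->|yk'] := eqVneq (y k') 0; first by rewrite mulr0 mul0r.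
have [->|g] := eqVneq (gmul k k' m) 0; first by rewrite mulr0.
move: hm; rewrite (gdeg_gmul g).
have -> : gdeg k = i by apply/eqP; apply: contraNT xk => /hx ->.
have -> : gdeg k' = j by apply/eqP; apply: contraNT yk' => /hy ->.
by rewrite eqxx.
Qed.

Lemma homog_apow l n : homog 1 l -> homog n (apow l n).
Proof. by move=> hl; elim: n => [|n IHn] /=; [exact: homog_gone | exact: (homog_amul hl IHn)]. Qed.

Lemma pairing_gonel l k x : pairing l k (gone A) x = aint (amul x (apow l k)).
Proof. by rewrite /pairing amul1. Qed.

Lemma pairing_goner l k x : pairing l k x (gone A) = aint (amul x (apow l k)).
Proof. by rewrite /pairing amul1. Qed.

Lemma pairing_bound_eq0 d l k i j x y :
  degree_bounded A d -> homog 1 l -> homog i x -> homog j y ->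
  (d < i + j + k)%N -> pairing l k x y = 0.
Proof.
move=> hd hl hx hy hk; rewrite /pairing (homog_bound_eq0 (x := amul x _) hd hk) ?aint0 //.
by rewrite -addnA; apply/homog_amul/homog_amul/homog_apow.
Qed.

Lemma gone_index :
  exists2 k0, gone A k0 != 0 & forall k, (gdeg k == 0%N) = (k == k0).
Proof.
have [k0 g0|g0] := pickP (fun k => gone A k != 0); last first.
  case: gcA => _ _ _ _ [/eqP gone_neq0 _]; exfalso; apply: gone_neq0.
  by apply/ffunP => k; rewrite ffunE; apply/eqP/negbFE/g0.
exists k0 => // k; apply/idP/eqP => [/eqP dk|->]; last first.
  by apply/eqP; apply: contraNeq g0 => /homog_gone ->.
apply/eqP; apply: contraT => kk0.
have [c ec] : exists c, [ffun j => (j == k)%:R] = escale c (gone A).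
  by apply/homog0P => j dj; rewrite ffunE; case: eqP => // ejk; rewrite ejk dk in dj.
have := congr1 (fun f : elt A => f k0) ec; have := congr1 (fun f : elt A => f k) ec.
rewrite !ffunE eqxx eq_sym (negbTE kk0) => e1 /esym /eqP.
rewrite mulf_eq0 (negbTE g0) orbF => /eqP c0.
by move: e1; rewrite c0 mul0r => /eqP; rewrite oner_eq0.
Qed.

End GradedAlgebra.

Section PoincareDuality.
Variables (R : realType) (A : galg R) (d : nat).
Hypothesis pdA : is_PD A d.

Lemma PD_gcalg : is_gcalg A.
Proof. by case: pdA. Qed.

Lemma PD_degree_bounded : degree_bounded A d.
Proof. by case: pdA. Qed.

Lemma PD_top_eq0 (x : elt A) : homog d x -> aint x = 0 -> x = 0.
Proof. by case: pdA => _ _ h *; apply: h. Qed.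

End PoincareDuality.

Section HodgeIndex.
Variables (R : realType) (A : galg R) (d : nat) (l : elt A).
Hypotheses (pdA : is_PD A d) (hl : homog 1 l) (hHR : HRle1 d l).

Let gcA := PD_gcalg pdA.
Let alpha := pairing l d (gone A) (gone A).

Lemma pairing_gone_gt0 : 0 < pairing l d (gone A) (gone A).
Proof.
case: hHR => hHR0 _; have := hHR0 (leq0n _) (gone A).
rewrite /Qform expr0 mul1r muln0 subn0; apply; last by case: gcA => _ _ _ _ [].
split; first exact: homog_gone.
apply: (homog_bound_eq0 (PD_degree_bounded pdA) _
  (homog_amul gcA (homog_gone gcA) (homog_apow gcA hl))).
by rewrite add0n; lia.
Qed.

Variable a : elt A.
Hypothesis ha : homog 1 a.

Let s := pairing l (d - 1) (gone A) a.
Let q := pairing l (d - 2) a a.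
(* Subtracting from [a] its component along [l] makes it primitive. *)
Let a0 := escale alpha a + escale (- s) l.

Let alpha_apow : alpha = aint (apow l d).
Proof. by rewrite /alpha /pairing !amul1. Qed.

Let s_apow : s = aint (amul a (apow l (d - 1))).
Proof. exact: pairing_gonel. Qed.

Lemma primitive_correction_Qform : (1 < d)%N ->
  primitive d l 1 a0 /\ Qform d l 1 a0 a0 = alpha * (alpha * q - s ^+ 2).
Proof.
move=> d_gt1; have ha0 : homog 1 a0 by apply: homogD; apply: homogZ.
have apowS n : (0 < n)%N -> amul l (apow l (n - 1)) = apow l n.
  by case: n => // n _; rewrite subSS subn0.
have lP1 : amul l (apow l (d - 1)) = apow l d by rewrite apowS 1?ltnW.
have lP2 : amul l (apow l (d - 2)) = apow l (d - 1).
  by rewrite -[RHS]apowS -?subnDA //; lia.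
split.
  split=> //; rewrite (_ : d - 2 * 1 + 1 = d - 1)%N; last by lia.
  apply: (PD_top_eq0 pdA).
    by have := homog_amul gcA ha0 (homog_apow gcA (n := d - 1) hl); rewrite subnKC 1?ltnW.
  by rewrite amulDl !amulZl aintD !aintZ -s_apow lP1 -alpha_apow; ring.
have laP : amul l (amul a (apow l (d - 2))) = amul a (apow l (d - 1)).
  by rewrite -amulA // (amulC gcA l) amulA // lP2.
rewrite /Qform muln1 /a0 !(amulDl, amulDr, amulZl, amulZr) !(aintD, aintZ).
rewrite laP lP2 lP1 -s_apow -alpha_apow -/(pairing l (d - 2) a a) -/q; ring.
Qed.

Let q_small : (d <= 1)%N -> q = 0.
Proof. by move=> d_le1; apply: (pairing_bound_eq0 gcA (PD_degree_bounded pdA) hl ha ha); lia. Qed.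

Lemma hodge_index : q * alpha <= s ^+ 2.
Proof.
have [d_gt1|/q_small->] := ltnP 1 d; last by rewrite mul0r sqr_ge0.
have [prim eQ] := primitive_correction_Qform d_gt1.
have [a00|a0n] := eqVneq a0 0.
  move: eQ; rewrite {1 2}a00 /Qform amul0l aint0 => /esym/eqP.
  by rewrite mulf_eq0 (gt_eqF pairing_gone_gt0) subr_eq0 /= => /eqP <-; rewrite mulrC.
case: hHR => _ /(_ d_gt1 _ prim a0n); rewrite eQ expr1 mulN1r oppr_gt0.
by rewrite pmulr_rlt0 ?pairing_gone_gt0 // subr_lt0 mulrC => /ltW.
Qed.

Lemma hodge_index_strict : a != 0 -> s = 0 -> q < 0.
Proof.
move=> an0 s0; have apos := pairing_gone_gt0.
have [d_gt1|d_le1] := ltnP 1 d; last first.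
  case/eqP: an0; have [d0|d_gt0] := posnP d.
    by apply: (homog_bound_eq0 (PD_degree_bounded pdA) _ ha); rewrite d0.
  have d1 : d = 1%N by lia.
  apply: (PD_top_eq0 pdA); first by rewrite d1.
  by rewrite -s0 s_apow d1 /= amulC // amul1.
have [prim eQ] := primitive_correction_Qform d_gt1.
have a0n : a0 != 0.
  apply: contra an0 => /eqP/ffunP a00; apply/eqP/ffunP => k; move: (a00 k).
  by rewrite !ffunE s0 oppr0 mul0r addr0 => /eqP; rewrite mulf_eq0 (gt_eqF apos) => /eqP.
case: hHR => _ /(_ d_gt1 _ prim a0n); rewrite eQ s0 expr0n subr0 expr1 mulN1r oppr_gt0.
by rewrite !pmulr_rlt0.
Qed.

End HodgeIndex.

Lemma sum_binomial_succ (V : zmodType) (X : nat -> nat -> V) n :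
  \sum_(j < n.+1) (X j.+1 (n - j)%N + X j (n - j).+1) *+ 'C(n, j) =
  \sum_(j < n.+2) X j (n.+1 - j)%N *+ 'C(n.+1, j).
Proof.
rewrite [RHS]big_ord_recl /=.
under [in RHS]eq_bigr => j _ do rewrite binS mulrnDr subSS.
rewrite big_split /= addrC.
under eq_bigr => j _ do rewrite mulrnDl.
rewrite big_split /= [RHS]addrCA; congr (_ + _).
rewrite big_ord_recl [in RHS]big_ord_recr /= (bin_small (ltnSn n)) mulr0n addr0.
rewrite !subn0 !bin0; congr (_ + _).
by apply: eq_bigr => j _; rewrite /bump /= add1n subnSK.
Qed.

Section Tensor.
Variables (R : realType) (A B : galg R) (lA : elt A) (lB : elt B).

Lemma etens_mul (a a' : elt A) (b b' : elt B) :
  amul (etens a b) (etens a' b') = etens (amul a a') (amul b b').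
Proof.
apply/ffunP => -[m m']; rewrite !ffunE /=.
transitivity (\sum_k \sum_k' \sum_l \sum_l'
   ((a k * a' l * gmul k l m) * (b k' * b' l' * gmul k' l' m'))).
  symmetry; rewrite pair_bigA; apply: eq_bigr => -[k k'] _.
  by rewrite pair_bigA; apply: eq_bigr => -[l l'] _ /=; rewrite !ffunE /=; ring.
rewrite big_distrl; apply: eq_bigr => k _ /=.
rewrite big_distrl /= exchange_big; apply: eq_bigr => k' _ /=.
rewrite big_distrr; apply: eq_bigr => l _ /=.
by rewrite big_distrr; apply: eq_bigr => l' _ /=; ring.
Qed.

Lemma aint_etens (a : elt A) (b : elt B) : aint (etens a b) = aint a * aint b.
Proof.
rewrite /aint big_distrl /=; under [RHS]eq_bigr do rewrite big_distrr /=.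
by rewrite pair_big /=; apply: eq_bigr => -[k k'] _; rewrite !ffunE /=; ring.
Qed.

Hypotheses (gcA : is_gcalg A) (gcB : is_gcalg B).

Let L := etens lA (gone B) + etens (gone A) lB.

Lemma apow_etens n :
  apow L n = \sum_(j < n.+1) etens (apow lA j) (apow lB (n - j)) *+ 'C(n, j).
Proof.
elim: n => [|n IHn]; first by rewrite big_ord1.
rewrite /= IHn amul_sumr -(sum_binomial_succ (fun i j => etens (apow lA i) (apow lB j))).
by apply: eq_bigr => j _; rewrite amulMnr amulDl !etens_mul !amul1.
Qed.

Lemma pairing_etens k (u u' : elt A) (v v' : elt B) :
  pairing L k (etens u v) (etens u' v') =
  \sum_(j < k.+1) (pairing lA j u u' * pairing lB (k - j) v v') *+ 'C(k, j).
Proof.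
rewrite /pairing apow_etens !amul_sumr aint_sum; apply: eq_bigr => j _.
by rewrite !amulMnr aintMn !etens_mul aint_etens.
Qed.

Variables dA dB : nat.
Hypotheses (bA : degree_bounded A dA) (bB : degree_bounded B dB).
Hypotheses (hlA : homog 1 lA) (hlB : homog 1 lB).

(* Only the term of the binomial expansion of [L^k] landing in bidegree [(dA, dB)] survives. *)
Lemma pairing_etens_top k (u u' : elt A) (v v' : elt B) eu eu' ev ev' :
  homog eu u -> homog eu' u' -> homog ev v -> homog ev' v' ->
  (eu + eu' + (ev + ev') + k = dA + dB)%N ->
  pairing L k (etens u v) (etens u' v') =
  (pairing lA (dA - (eu + eu')) u u' * pairing lB (dB - (ev + ev')) v v')
    *+ 'C(k, dA - (eu + eu')).
Proof.
move=> hu hu' hv hv' hk; rewrite pairing_etens.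
have vanish j : (j <= k)%N -> (eu + eu' + j != dA)%N ->
    pairing lA j u u' * pairing lB (k - j) v v' = 0.
  move=> jk /eqP jA; have [hA|hB] : (dA < eu + eu' + j \/ dB < ev + ev' + (k - j))%N by lia.
    by rewrite (pairing_bound_eq0 gcA bA hlA hu hu' hA) mul0r.
  by rewrite (pairing_bound_eq0 gcB bB hlB hv hv' hB) mulr0.
have [top|] := boolP ((eu + eu' <= dA) && (ev + ev' <= dB))%N.
  have j0k : (dA - (eu + eu') < k.+1)%N by lia.
  rewrite (bigD1 (Ordinal j0k)) //= big1 ?addr0.
    by rewrite (_ : k - (dA - (eu + eu')) = dB - (ev + ev'))%N //; lia.
  move=> j jj0; rewrite vanish ?mul0rn //; first by have := ltn_ord j; lia.
  by apply: contra jj0 => /eqP ejA; apply/eqP/val_inj => /=; lia.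
rewrite negb_and -!ltnNge => /orP out.
rewrite big1 => [|j _]; last by rewrite vanish ?mul0rn //; have := ltn_ord j; lia.
case: out => [hA|hB].
  by rewrite (pairing_bound_eq0 gcA bA hlA hu hu') ?mul0r ?mul0rn //; lia.
by rewrite (pairing_bound_eq0 gcB bB hlB hv hv') ?mulr0 ?mul0rn //; lia.
Qed.

End Tensor.

Section TensorLowDegree.
Variables (R : realType) (A B : galg R).

Lemma homog_etens i j (a : elt A) (b : elt B) :
  homog i a -> homog j b -> homog (i + j) (etens a b).
Proof.
move=> ha hb [k k'] /= hk; rewrite ffunE /=.
have [/eqP dk|/ha->] := boolP (gdeg k == i); last by rewrite mul0r.
by rewrite hb ?mulr0 //; apply: contra hk => /eqP->; rewrite dk.
Qed.

Hypotheses (gcA : is_gcalg A) (gcB : is_gcalg B).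

Lemma homog0_etens (x : elt (gtensor A B)) :
  homog 0 x -> exists c, x = escale c (etens (gone A) (gone B)).
Proof.
move=> hx; have [k0 gk0 dA0] := gone_index gcA; have [k0' gk0' dB0] := gone_index gcB.
exists (x (k0, k0') / (gone A k0 * gone B k0')); apply/ffunP => -[k k'].
have [d0|d0] := eqVneq (gdeg k + gdeg k')%N 0%N; last first.
  by rewrite hx // ffunE (homog_etens (homog_gone gcA) (homog_gone gcB)) ?mulr0.
move: d0 => /eqP; rewrite addn_eq0 dA0 dB0 => /andP[/eqP-> /eqP->].
by rewrite !ffunE /=; field; apply/andP.
Qed.

Lemma homog1_etens (x : elt (gtensor A B)) : homog 1 x ->
  exists a b, [/\ homog 1 a, homog 1 b & x = etens a (gone B) + etens (gone A) b].
Proof.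
move=> hx; have [k0 gk0 dA0] := gone_index gcA; have [k0' gk0' dB0] := gone_index gcB.
have gA k : k != k0 -> gone A k = 0 by rewrite -dA0; apply: homog_gone.
have gB k' : k' != k0' -> gone B k' = 0 by rewrite -dB0; apply: homog_gone.
pose a : elt A := [ffun k => x (k, k0') / gone B k0'].
pose b : elt B := [ffun k' => x (k0, k') / gone A k0].
have ha : homog 1 a.
  by move=> k dk; rewrite ffunE hx ?mul0r //= (eqP (_ : gdeg k0' == 0%N)) ?dB0 ?addn0.
have hb : homog 1 b.
  by move=> k' dk'; rewrite ffunE hx ?mul0r //= (eqP (_ : gdeg k0 == 0%N)) ?dA0.
exists a, b; split=> //; apply/ffunP => -[k k'].
have [d1|d1] := eqVneq (gdeg k + gdeg k')%N 1%N; last first.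
  rewrite hx //; apply/esym/(homogD (homog_etens ha (homog_gone gcB))) => //.
  exact: (homog_etens (homog_gone gcA) hb).
have dk0 : gdeg k0 = 0%N by apply/eqP; rewrite dA0.
have dk0' : gdeg k0' = 0%N by apply/eqP; rewrite dB0.
rewrite !ffunE /=; have [ek|nk] := eqVneq k k0.
  have nk' : k' != k0' by apply: contra_eqN d1; rewrite ek => /eqP->; rewrite dk0 dk0'.
  by rewrite ek (gB _ nk') mulr0 add0r; field.
have ek' : k' = k0' by apply/eqP; rewrite -dB0; move: nk d1; rewrite -dA0; lia.
by rewrite ek' (gA _ nk) mul0r addr0; field.
Qed.

End TensorLowDegree.

Lemma hodge_product_lt0 (R : realFieldType) (n m al be sA sB qA qB : R) :
  1 <= n -> 1 <= m -> 0 < al -> 0 < be ->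
  qA * al <= sA ^+ 2 -> qB * be <= sB ^+ 2 ->
  n * sA * be + m * al * sB = 0 ->
  (sA = 0 -> sB = 0 -> (1 < n /\ qA < 0) \/ (1 < m /\ qB < 0)) ->
  n * (n - 1) * qA * be + 2 * n * m * sA * sB + m * (m - 1) * al * qB < 0.
Proof.
move=> n1 m1 al0 be0 hA hB prim strict.
have [[sA0 sB0]|s0] : (sA = 0 /\ sB = 0) \/ (0 < n * (sA * be) ^+ 2 + m * (al * sB) ^+ 2).
  have [sA0|sAn] := eqVneq sA 0; have [sB0|sBn] := eqVneq sB 0; [by left | right ..].
  - have : 0 < (al * sB) ^+ 2 by rewrite exprn_even_gt0 // mulf_neq0 // gt_eqF.
    by rewrite sA0 mul0r expr0n /= mulr0 add0r; nra.
  - have : 0 < (sA * be) ^+ 2 by rewrite exprn_even_gt0 // mulf_neq0 // gt_eqF.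
    by rewrite sB0 mulr0 expr0n /= mulr0 addr0; nra.
  - have : 0 < (al * sB) ^+ 2 by rewrite exprn_even_gt0 // mulf_neq0 // gt_eqF.
    have : 0 <= (sA * be) ^+ 2 by apply: sqr_ge0.
    nra.
  rewrite sA0 sB0 !mulr0 addr0.
  have qA0 : qA <= 0 by move: hA; rewrite sA0 expr0n /= pmulr_lle0.
  have qB0 : qB <= 0 by move: hB; rewrite sB0 expr0n /= pmulr_lle0.
  have cA : 0 <= n * (n - 1) * be by rewrite !mulr_ge0 ?subr_ge0 //; lra.
  have cB : 0 <= m * (m - 1) * al by rewrite !mulr_ge0 ?subr_ge0 //; lra.
  case: (strict sA0 sB0) => -[h1 hq].
    have cA' : 0 < n * (n - 1) * be by rewrite !mulr_gt0 ?subr_gt0 //; lra.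
    nra.
  have cB' : 0 < m * (m - 1) * al by rewrite !mulr_gt0 ?subr_gt0 //; lra.
  nra.
(* With [X = sA be] and [Y = al sB], [(n X + m Y)^2 = 0] turns the Hodge index bounds into
   [al be E <= -(n X^2 + m Y^2)]. *)
have hA' : n * (n - 1) * be ^+ 2 * (qA * al) <= n * (n - 1) * be ^+ 2 * sA ^+ 2.
  by rewrite ler_wpM2l // !mulr_ge0 ?sqr_ge0 ?subr_ge0; lra.
have hB' : m * (m - 1) * al ^+ 2 * (qB * be) <= m * (m - 1) * al ^+ 2 * sB ^+ 2.
  by rewrite ler_wpM2l // !mulr_ge0 ?sqr_ge0 ?subr_ge0; lra.
rewrite -(pmulr_rlt0 _ (mulr_gt0 al0 be0)).
have sq : (n * sA * be + m * al * sB) ^+ 2 = 0 by rewrite prim expr0n.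
nra.
Qed.

Lemma hodge_product_binomial_lt0 (R : realFieldType) (n m : nat) (al be sA sB qA qB : R) :
  (0 < n)%N -> (0 < m)%N -> 0 < al -> 0 < be ->
  qA * al <= sA ^+ 2 -> qB * be <= sB ^+ 2 ->
  ((n <= 1)%N -> qA = 0) -> ((m <= 1)%N -> qB = 0) ->
  (sA = 0 -> sB = 0 -> qA < 0 \/ qB < 0) ->
  sA * be *+ 'C(n + m - 1, n - 1) + al * sB *+ 'C(n + m - 1, n) = 0 ->
  qA * be *+ 'C(n + m - 2, n - 2) + sA * sB *+ 'C(n + m - 2, n - 1)
    + sA * sB *+ 'C(n + m - 2, n - 1) + al * qB *+ 'C(n + m - 2, n) < 0.
Proof.
(* Multiplying by [N (N - 1) / 'C(N, n)], [N = n + m], turns the binomial coefficients into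
   [n (n - 1)], [n m], [m (m - 1)], and those of the primitivity relation into [n], [m]. *)
case: n => // i _; case: m => // j _ al0 be0 hA hB qA0 qB0 strict.
have -> : (i.+1 + j.+1 - 1 = (i + j).+1)%N by lia.
have -> : (i.+1 + j.+1 - 2 = i + j)%N by lia.
have -> : (i.+1 - 2 = i.-1)%N by lia.
rewrite subn1 /= => prim.
set c0 := 'C((i + j).+2, i.+1); set c1 := 'C((i + j).+1, i); set c2 := 'C((i + j).+1, i.+1).
have c0_gt0 : 0 < c0%:R :> R by rewrite ltr0n bin_gt0; lia.
have e1 : (i + j).+2%:R * c1%:R = i.+1%:R * c0%:R :> R by rewrite -!natrM mul_bin_diag.
have e2 : (i + j).+2%:R * c2%:R = j.+1%:R * c0%:R :> R.
  by rewrite -!natrM mul_bin_down; congr (_ * _)%:R; lia.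
have e3 : (i + j).+1%:R * 'C(i + j, i)%:R = i.+1%:R * c2%:R :> R.
  by rewrite -!natrM mul_bin_diag.
have e4 : (i + j).+1%:R * 'C(i + j, i.+1)%:R = j%:R * c2%:R :> R.
  by rewrite -!natrM mul_bin_down; congr (_ * _)%:R; lia.
have e5 : (i + j).+1%:R * 'C(i + j, i.-1)%:R * qA = i%:R * c1%:R * qA :> R.
  have [i0|i_gt0] := posnP i; first by rewrite qA0 ?i0 // !mulr0.
  by rewrite -!natrM mul_bin_diag prednK.
have := @hodge_product_lt0 _ i.+1%:R j.+1%:R al be sA sB qA qB.
rewrite !ler1n => /(_ isT isT al0 be0 hA hB) core.
have prim' : i.+1%:R * sA * be + j.+1%:R * al * sB = 0.
  apply: (mulfI (lt0r_neq0 c0_gt0)); rewrite mulr0 -[RHS](mulr0 (i + j).+2%:R) -prim.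
  transitivity (sA * be * ((i + j).+2%:R * c1%:R) + al * sB * ((i + j).+2%:R * c2%:R)).
    by rewrite e1 e2; ring.
  by rewrite -!(mulr_natr (_ * _)); ring.
have strict' : sA = 0 -> sB = 0 ->
    (1 < i.+1%:R :> R) /\ qA < 0 \/ (1 < j.+1%:R :> R) /\ qB < 0.
  move=> sA0 sB0; case: (strict sA0 sB0) => hq; [left|right]; rewrite ltr1n ltnS lt0n.
    by split=> //; apply: contraTneq hq => i0; rewrite qA0 ?i0 // ltxx.
  by split=> //; apply: contraTneq hq => j0; rewrite qB0 ?j0 // ltxx.
have NN_gt0 : 0 < (i + j).+2%:R * (i + j).+1%:R :> R by rewrite mulr_gt0 ?ltr0n.
have := core prim' strict'; set F := (X in X < 0) => F_lt0.
rewrite -(pmulr_rlt0 _ NN_gt0) -!(mulr_natr (_ * _)).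
rewrite [X in X < 0](_ : _ = c0%:R * F) ?pmulr_rlt0 // /F.
transitivity ((i + j).+2%:R * be * ((i + j).+1%:R * 'C(i + j, i.-1)%:R * qA)
  + 2 * (i + j).+2%:R * sA * sB * ((i + j).+1%:R * 'C(i + j, i)%:R)
  + (i + j).+2%:R * al * qB * ((i + j).+1%:R * 'C(i + j, i.+1)%:R)); first by ring.
rewrite e5 e3 e4.
transitivity (be * qA * i%:R * ((i + j).+2%:R * c1%:R)
  + 2 * sA * sB * i.+1%:R * ((i + j).+2%:R * c2%:R)
  + al * qB * j%:R * ((i + j).+2%:R * c2%:R)); first by ring.
by rewrite e1 e2; ring.
Qed.

Section Product.
Variables (R : realType) (A B : galg R) (dA dB : nat) (lA : elt A) (lB : elt B).
Hypotheses (dA_gt0 : (0 < dA)%N) (dB_gt0 : (0 < dB)%N).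
Hypotheses (pdA : is_PD A dA) (pdB : is_PD B dB).
Hypotheses (hlA : homog 1 lA) (hlB : homog 1 lB).
Hypotheses (hHRA : HRle1 dA lA) (hHRB : HRle1 dB lB).

Let gcA := PD_gcalg pdA.
Let gcB := PD_gcalg pdB.
Let L := etens lA (gone B) + etens (gone A) lB.
Let pairing_top :=
  pairing_etens_top gcA gcB (PD_degree_bounded pdA) (PD_degree_bounded pdB) hlA hlB.
Let unitA : homog 0 (gone A) := homog_gone gcA.
Let unitB : homog 0 (gone B) := homog_gone gcB.

Lemma HR0_etens : HR (dA + dB) L 0.
Proof.
move=> _ x [hx _] xn0; have [c ex] := homog0_etens gcA gcB hx.
rewrite expr0 mul1r /Qform muln0 subn0 -/(pairing L _ x x) ex pairingZ.
rewrite (pairing_top unitA unitA unitB unitB) ?addn0 ?subn0 //.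
have c0 : c != 0.
  by apply: contraNneq xn0 => c0; rewrite ex c0; apply/eqP/ffunP => k; rewrite !ffunE mul0r.
apply: mulr_gt0; first by rewrite -expr2 exprn_even_gt0.
by rewrite pmulrn_lgt0 ?bin_gt0 ?leq_addr ?mulr_gt0 ?pairing_gone_gt0.
Qed.

Lemma HR1_etens : HR (dA + dB) L 1.
Proof.
move=> _ x [hx hp] xn0; have [a [b [ha hb ex]]] := homog1_etens gcA gcB hx.
have prim : pairing L (dA + dB - 1) (etens (gone A) (gone B)) x = 0.
  by rewrite /pairing (_ : dA + dB - 1 = dA + dB - 2 * 1 + 1)%N ?hp ?amul0r ?aint0 //; lia.
rewrite expr1 mulN1r oppr_gt0 /Qform muln1 -/(pairing L _ x x).
move: prim; rewrite ex !(pairingDl, pairingDr).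
rewrite (pairing_top unitA ha unitB unitB) ?(pairing_top unitA unitA unitB hb); try lia.
rewrite (pairing_top ha ha unitB unitB) ?(pairing_top ha unitA unitB hb); try lia.
rewrite ?(pairing_top unitA ha hb unitB) ?(pairing_top unitA unitA hb hb); try lia.
rewrite !(pairing_goner gcA) !(pairing_goner gcB) -!(pairing_gonel gcA) -!(pairing_gonel gcB).
rewrite !addn0 !add0n !subn0 addrA; change (1 + 1)%N with 2%N.
apply: hodge_product_binomial_lt0 => //.
- exact: pairing_gone_gt0 pdA hlA hHRA.
- exact: pairing_gone_gt0 pdB hlB hHRB.
- exact: (hodge_index pdA hlA hHRA ha).
- exact: (hodge_index pdB hlB hHRB hb).
- by move=> ?; apply: (pairing_bound_eq0 gcA (PD_degree_bounded pdA) hlA ha ha); lia.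
- by move=> ?; apply: (pairing_bound_eq0 gcB (PD_degree_bounded pdB) hlB hb hb); lia.
move=> sA0 sB0; have [a0|an0] := eqVneq a 0.
  have [b0|bn0] := eqVneq b 0.
    case/eqP: xn0; rewrite ex a0 b0.
    by apply/ffunP => -[k k']; rewrite !ffunE !mul0r mulr0 addr0.
  by right; apply: (hodge_index_strict pdB hlB hHRB hb bn0 sB0).
by left; apply: (hodge_index_strict pdA hlA hHRA ha an0 sA0).
Qed.

End Product.

Theorem proposition6p5 (R : realType) (A B : galg R) (dA dB : nat)
  (lA : elt A) (lB : elt B) :
  (1 <= dA)%N -> (1 <= dB)%N ->
  is_PD A dA -> is_PD B dB ->
  homog 1 lA -> homog 1 lB ->
  HRle1 dA lA -> HRle1 dB lB ->
  HRle1 (dA + dB) (etens lA (gone B) + etens (gone A) lB).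
Proof.
move=> dA_gt0 dB_gt0 pdA pdB hlA hlB hHRA hHRB.
by split; [apply: HR0_etens | apply: HR1_etens].
Qed.
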